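(* For every real $t>0$, $\varphi(1/t)=t^3\varphi(t)$. Moreover $\varphi(t)\to1$ as $t\to0^+$; more precisely, for $0<t\le 1/2$, $\varphi(t)=\frac{1}{135135\,t^{21}}\sum_{\varepsilon_1,\dots,\varepsilon_6\in\{\pm1\}}\varepsilon_1\cdots\varepsilon_6(1+\varepsilon_1t+\dots+\varepsilon_6t^6)^{13/2}$ and $\varphi(t)=1-\tfrac{1}{24}t^2+O(t^4)$.
   Context: For $t>0$ define \[\varphi(t)=\frac{1}{135135\;t^{21}}\sum_{\varepsilon_0,\dots,\varepsilon_6\in\{\pm1\}}\varepsilon_0\varepsilon_1\cdots\varepsilon_6\max\{\varepsilon_0+\varepsilon_1t+\dots+\varepsilon_6t^6,0\}^{13/2},\] where $135135=3\cdot5\cdot7\cdot9\cdot11\cdot13$. *)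

From Stdlib Require Import Reals Lra List.
Import ListNotations.
Open Scope R_scope.

Fixpoint sign_vecs (n : nat) : list (list R) :=
  match n with
  | O => [[]]
  | S m => flat_map (fun v => [1 :: v; -1 :: v]) (sign_vecs m)
  end.

Definition prodR (e : list R) : R := fold_right Rmult 1 e.

Fixpoint sgn_poly (e : list R) (t : R) (k : nat) : R :=
  match e with
  | [] => 0
  | a :: e' => a * t ^ k + sgn_poly e' t (S k)
  end.

Definition sum_over (l : list (list R)) (f : list R -> R) : R :=
  fold_right (fun v acc => f v + acc) 0 l.

(* max{x,0}^(13/2), the non-negative real 13/2-power of the positive part. *)
Definition pos_pow13_2 (x : R) : R := sqrt (Rmax x 0) ^ 13.

Definition phi (t : R) : R :=
  / (135135 * t ^ 21) *
  sum_over (sign_vecs 7) (fun e => prodR e * pos_pow13_2 (sgn_poly e t 0)).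

(* - Symmetry: reversing a sign vector turns its polynomial at 1/t into t^-6
     times its polynomial at t, and max(.,0)^(13/2) is homogeneous of degree
     13/2; since the sum over {+-1}^7 is invariant under reversal,
     phi(1/t) = t^3 phi(t).
   - Small t: for t <= 1/2 the perturbation x = e_1 t + ... + e_6 t^6 satisfies
     |x| < 2t <= 1, so only the vectors with e_0 = +1 contribute and the
     positive part disappears.
   - Expansion: sqrt(1+x) is approximated by its Taylor polynomial of degree
     24, with an exact integer certificate for the O(x^25) error.  Replacing
     (1+x)^(13/2) = (1+x)^6 sqrt(1+x) by (1+x)^6 times this polynomial, the
     signed sum becomes an explicit polynomial in t, computed by [ring]:
     135135 (t^21 - t^23/24) + O(t^25).  The approximation error is O(t^25)
     as well, whence phi(t) = 1 - t^2/24 + O(t^4), and the limit 1 at 0. *)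

From Stdlib Require Import Reals Lra List ZArith.
Import ListNotations.
Open Scope R_scope.

Lemma sum_over_cons (a : list R) (l : list (list R)) (f : list R -> R) :
  sum_over (a :: l) f = f a + sum_over l f.
Proof. reflexivity. Qed.

Lemma sum_over_ext (l : list (list R)) (f g : list R -> R) :
  (forall e, In e l -> f e = g e) -> sum_over l f = sum_over l g.
Proof.
  induction l as [|a l IH]; intros Hfg; [reflexivity|].
  rewrite !sum_over_cons, (Hfg a (or_introl eq_refl)), IH; [reflexivity|].
  intros e He; exact (Hfg e (or_intror He)).
Qed.

Lemma sum_over_minus (l : list (list R)) (f g : list R -> R) :
  sum_over l (fun e => f e - g e) = sum_over l f - sum_over l g.
Proof.
  induction l as [|a l IH]; [cbn; ring|].
  rewrite !sum_over_cons, IH; ring.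
Qed.

Lemma sum_over_scal (l : list (list R)) (c : R) (f : list R -> R) :
  sum_over l (fun e => c * f e) = c * sum_over l f.
Proof.
  induction l as [|a l IH]; [cbn; ring|].
  rewrite !sum_over_cons, IH; ring.
Qed.

Lemma sum_over_abs_bound (l : list (list R)) (f : list R -> R) (B : R) :
  (forall e, In e l -> Rabs (f e) <= B) -> Rabs (sum_over l f) <= INR (length l) * B.
Proof.
  induction l as [|a l IH]; intros Hf.
  - cbn; rewrite Rabs_R0; lra.
  - rewrite sum_over_cons; cbn [length]; rewrite S_INR.
    pose proof (Hf a (or_introl eq_refl)) as Ha.
    pose proof (IH (fun e He => Hf e (or_intror He))) as Hl.
    pose proof (Rabs_triang (f a) (sum_over l f)); lra.
Qed.

Lemma sign_vecs_S (n : nat) (f : list R -> R) :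
  sum_over (sign_vecs (S n)) f = sum_over (sign_vecs n) (fun v => f (1 :: v) + f (-1 :: v)).
Proof.
  cbn [sign_vecs]. induction (sign_vecs n) as [|v l IH]; [reflexivity|].
  cbn [flat_map app]. rewrite !sum_over_cons, IH; ring.
Qed.

Lemma sign_vecs_S_last (n : nat) (f : list R -> R) :
  sum_over (sign_vecs (S n)) f
  = sum_over (sign_vecs n) (fun v => f (v ++ [1]) + f (v ++ [-1])).
Proof.
  revert f; induction n as [|n IH]; intros f; [cbn; ring|].
  rewrite (sign_vecs_S (S n)), IH, (sign_vecs_S n).
  apply sum_over_ext; intros v _; cbn [app]; ring.
Qed.

Lemma sum_over_sign_vecs_rev (n : nat) (F : list R -> R) :
  sum_over (sign_vecs n) (fun e => F (rev e)) = sum_over (sign_vecs n) F.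
Proof.
  revert F; induction n as [|n IH]; intros F; [reflexivity|].
  rewrite sign_vecs_S, sign_vecs_S_last.
  exact (IH (fun w => F (w ++ [1]) + F (w ++ [-1]))).
Qed.

Lemma sign_vecs_spec (n : nat) (e : list R) :
  In e (sign_vecs n) -> length e = n /\ Forall (fun a => Rabs a = 1) e.
Proof.
  revert e; induction n as [|n IH]; intros e He; cbn [sign_vecs] in He.
  - destruct He as [He|[]]; subst; split; auto.
  - apply in_flat_map in He; destruct He as [v [Hv He]].
    destruct (IH v Hv) as [Hlen Hsgn].
    destruct He as [He|[He|[]]]; subst; split; cbn; auto; constructor; auto.
    + apply Rabs_R1.
    + rewrite Rabs_left; lra.
Qed.

Lemma prodR_abs (e : list R) : Forall (fun a => Rabs a = 1) e -> Rabs (prodR e) = 1.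
Proof.
  induction 1 as [|a e Ha _ IH]; [apply Rabs_R1|].
  change (prodR (a :: e)) with (a * prodR e); rewrite Rabs_mult, Ha, IH; ring.
Qed.

Lemma prodR_app (l m : list R) : prodR (l ++ m) = prodR l * prodR m.
Proof.
  induction l as [|a l IH]; cbn [app]; [cbn; ring|].
  change (prodR (a :: l ++ m)) with (a * prodR (l ++ m)); rewrite IH; change (prodR (a :: l)) with (a * prodR l); ring.
Qed.

Lemma prodR_rev (e : list R) : prodR (rev e) = prodR e.
Proof.
  induction e as [|a e IH]; [reflexivity|].
  cbn [rev]; rewrite prodR_app, IH.
  change (prodR [a]) with (a * 1); change (prodR (a :: e)) with (a * prodR e); ring.
Qed.

Lemma sgn_poly_shift (e : list R) (t : R) (k : nat) :
  sgn_poly e t (S k) = t * sgn_poly e t k.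
Proof.
  revert k; induction e as [|a e IH]; intros k; cbn [sgn_poly]; [ring|].
  rewrite IH; cbn [pow]; ring.
Qed.

Lemma sgn_poly_app_last (l : list R) (a t : R) (k : nat) :
  sgn_poly (l ++ [a]) t k = sgn_poly l t k + a * t ^ (k + length l).
Proof.
  revert k; induction l as [|b l IH]; intros k; cbn [app sgn_poly length].
  - rewrite Nat.add_0_r; ring.
  - rewrite IH, Nat.add_succ_r; cbn [Nat.add]; ring.
Qed.

Lemma sgn_poly_rev (e : list R) (t : R) :
  t <> 0 -> t * sgn_poly (rev e) t 0 = t ^ length e * sgn_poly e (/ t) 0.
Proof.
  intros Ht; induction e as [|a e IH]; cbn [rev length sgn_poly]; [ring|].
  rewrite sgn_poly_app_last, length_rev, sgn_poly_shift, Rmult_plus_distr_l, IH.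
  cbn [pow Nat.add]; field; exact Ht.
Qed.

(* For 0 <= t <= 1/2 a sign polynomial is dominated by a geometric series. *)
Lemma sgn_poly_bound (e : list R) (t : R) (k : nat) :
  0 <= t <= 1/2 -> Forall (fun a => Rabs a = 1) e ->
  Rabs (sgn_poly e t k) <= 2 * t ^ k - 2 * t ^ (k + length e).
Proof.
  intros Ht He; revert k; induction He as [|a e Ha _ IH]; intros k; cbn [sgn_poly length].
  - rewrite Nat.add_0_r, Rabs_R0; lra.
  - pose proof (IH (S k)) as Hrest; cbn [pow Nat.add] in Hrest.
    rewrite Nat.add_succ_r; cbn [pow].
    pose proof (pow_le t k (proj1 Ht)) as Htk.
    pose proof (Rabs_triang (a * t ^ k) (sgn_poly e t (S k))) as Htri.
    rewrite Rabs_mult, Ha, (Rabs_pos_eq (t ^ k)) in Htri by exact Htk.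
    nra.
Qed.

Lemma sgn_tail_small (n : nat) (e : list R) (t : R) :
  In e (sign_vecs n) -> 0 < t <= 1/2 -> Rabs (sgn_poly e t 1) < 2 * t.
Proof.
  intros He Ht; destruct (sign_vecs_spec n e He) as [_ Hsgn].
  pose proof (sgn_poly_bound e t 1 ltac:(lra) Hsgn) as Hb.
  pose proof (pow_lt t (1 + length e) (proj1 Ht)); rewrite pow_1 in Hb; lra.
Qed.

Lemma pos_pow13_2_nonpos (y : R) : y <= 0 -> pos_pow13_2 y = 0.
Proof.
  intros Hy; unfold pos_pow13_2; rewrite Rmax_right, sqrt_0 by exact Hy; ring.
Qed.

Lemma pos_pow13_2_nonneg (y : R) : 0 <= y -> pos_pow13_2 y = sqrt y ^ 13.
Proof. intros Hy; unfold pos_pow13_2; rewrite Rmax_left by exact Hy; reflexivity. Qed.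

Lemma pos_pow13_2_scale (c y : R) :
  0 <= c -> pos_pow13_2 (c ^ 2 * y) = c ^ 13 * pos_pow13_2 y.
Proof.
  intros Hc; pose proof (pow2_ge_0 c) as Hc2; destruct (Rle_dec y 0) as [Hy|Hy].
  - rewrite (pos_pow13_2_nonpos y), (pos_pow13_2_nonpos (c ^ 2 * y)) by nra; ring.
  - rewrite (pos_pow13_2_nonneg y), (pos_pow13_2_nonneg (c ^ 2 * y)) by nra.
    rewrite sqrt_mult_alt, sqrt_pow2 by assumption.
    apply Rpow_mult_distr.
Qed.

Lemma pos_pow13_2_Rpower (y : R) : 0 < y -> pos_pow13_2 y = Rpower y (13 / 2).
Proof.
  intros Hy; rewrite pos_pow13_2_nonneg by lra.
  rewrite <- Rpower_sqrt, <- Rpower_pow, Rpower_mult by (auto; apply exp_pos).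
  f_equal; cbn [INR]; lra.
Qed.

Lemma phi_inv (t : R) : 0 < t -> phi (/ t) = t ^ 3 * phi t.
Proof.
  intros Ht; unfold phi.
  set (F := fun e => prodR e * pos_pow13_2 (sgn_poly e t 0)).
  assert (Hterm : forall e, In e (sign_vecs 7) ->
            prodR e * pos_pow13_2 (sgn_poly e (/ t) 0) = / t ^ 39 * F (rev e)).
  { intros e He; destruct (sign_vecs_spec 7 e He) as [Hlen _].
    pose proof (sgn_poly_rev e t ltac:(lra)) as Hrev; rewrite Hlen in Hrev.
    assert (Hinv : sgn_poly e (/ t) 0 = (/ t ^ 3) ^ 2 * sgn_poly (rev e) t 0).
    { apply (Rmult_eq_reg_l (t ^ 7)); [rewrite <- Hrev; field; lra|].
      apply pow_nonzero; lra. }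
    rewrite Hinv.
    rewrite pos_pow13_2_scale by (left; apply Rinv_0_lt_compat, pow_lt, Ht).
    unfold F; rewrite prodR_rev; field; lra. }
  rewrite (sum_over_ext _ _ _ Hterm), sum_over_scal, sum_over_sign_vecs_rev.
  fold F; field; lra.
Qed.

Lemma phi_small (t : R) : 0 < t <= 1/2 ->
  phi t = / (135135 * t ^ 21) *
    sum_over (sign_vecs 6) (fun e => prodR e * pos_pow13_2 (1 + sgn_poly e t 1)).
Proof.
  intros Ht; unfold phi; f_equal; rewrite sign_vecs_S.
  apply sum_over_ext; intros e He.
  pose proof (sgn_tail_small 6 e t He Ht) as Hx.
  pose proof (Rle_abs (sgn_poly e t 1)); pose proof (Rle_abs (- sgn_poly e t 1)).
  rewrite Rabs_Ropp in *.
  change (prodR (?a :: e)) with (a * prodR e); cbn [sgn_poly pow].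
  rewrite (pos_pow13_2_nonpos (-1 * 1 + _)) by lra.
  rewrite Rmult_1_r; ring.
Qed.

Lemma phi_small_Rpower (t : R) : 0 < t <= 1/2 ->
  phi t = / (135135 * t ^ 21) *
    sum_over (sign_vecs 6) (fun e => prodR e * Rpower (1 + sgn_poly e t 1) (13 / 2)).
Proof.
  intros Ht; rewrite phi_small by exact Ht; f_equal.
  apply sum_over_ext; intros e He; f_equal.
  pose proof (sgn_tail_small 6 e t He Ht) as Hx.
  pose proof (Rle_abs (- sgn_poly e t 1)); rewrite Rabs_Ropp in *.
  apply pos_pow13_2_Rpower; lra.
Qed.

Fixpoint zpoly (l : list Z) (x : R) : R :=
  match l with
  | [] => 0
  | a :: l' => IZR a + x * zpoly l' x
  end.

Definition zmax (l : list Z) : Z := fold_right (fun a m => Z.max (Z.abs a) m) 0%Z l.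

Lemma zpoly_bound (l : list Z) (x : R) :
  Rabs x <= 1/2 -> Rabs (zpoly l x) <= 2 * IZR (zmax l).
Proof.
  intros Hx; induction l as [|a l IH]; cbn [zpoly zmax fold_right].
  - rewrite Rabs_R0; lra.
  - fold (zmax l).
    assert (Ha : Rabs (IZR a) <= IZR (Z.max (Z.abs a) (zmax l)))
      by (rewrite <- abs_IZR; apply IZR_le, Z.le_max_l).
    assert (Hl : IZR (zmax l) <= IZR (Z.max (Z.abs a) (zmax l)))
      by (apply IZR_le, Z.le_max_r).
    pose proof (Rabs_triang (IZR a) (x * zpoly l x)) as Htri.
    rewrite Rabs_mult in Htri.
    pose proof (Rabs_pos x); pose proof (Rabs_pos (zpoly l x)).
    nra.
Qed.

(** A polynomial approximation of sqrt(1+x) to order 25, with an exact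
    certificate for its error: [sqrt_num / sqrt_den] is the Taylor polynomial
    of degree 24 of sqrt(1+x), whose coefficients binom(1/2,k) become integers
    after scaling by [sqrt_den = 2^46]. *)

Definition sqrt_den : Z := Eval compute in (2 ^ 46)%Z.

Definition sqrt_tail : list Z := [
    35184372088832; -8796093022208; 4398046511104; -2748779069440;
    1924145348608; -1443109011456; 1133871366144; -921270484992;
    767725404160; -652566593536; 563580239872; -493132709888;
    436232781824; -389493555200; 350544199680; -317680680960;
    289650032640; -265512529920; 244551014400; -226209688320;
    210051853440; -195730136160; 182965127280; -171529806825]%Z.

Definition sqrt_num : list Z := sqrt_den :: sqrt_tail.

Definition sqrt_defect : list Z := [
    22692233739187592871542784; -10036949538486819923951616; 6667055852859602606489600;
    -4924529891316751925248000; 3820755950159548907520000; -3048963248227320028200960;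
    2476959107430853367562240; -2036487956630277508300800; 1687998038918144458752000;
    -1406665032431787048960000; 1175971967112973972930560; -984431078530178969763840;
    823770289206646643097600; -687864866999477207040000; 572075426350714060800000;
    -472820339878865171251200; 387289831242241187020800; -313249128210636254208000;
    248899501097598574080000; -192778022680257268800000; 143683886237685084345600;
    -100623342691298094782400; 62767945876099875372000; -29422474629421816580625]%Z.

Lemma sqrt_num_defect (x : R) :
  IZR sqrt_den ^ 2 * (1 + x) - zpoly sqrt_num x ^ 2 = x ^ 25 * zpoly sqrt_defect x.
Proof. unfold sqrt_num, sqrt_den, sqrt_tail, sqrt_defect; cbn [zpoly]; ring. Qed.

Lemma sqrt_den_pos : 0 < IZR sqrt_den.
Proof. apply IZR_lt; reflexivity. Qed.

Lemma sqrt_num_lower (x : R) : Rabs x <= 1/4 -> 3/4 * IZR sqrt_den <= zpoly sqrt_num x.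
Proof.
  intros Hx; cbn [sqrt_num zpoly].
  pose proof (zpoly_bound sqrt_tail x ltac:(lra)) as Htail.
  assert (Hmax : 2 * IZR (zmax sqrt_tail) = IZR sqrt_den)
    by (rewrite <- mult_IZR; f_equal; reflexivity).
  pose proof (Rle_abs (- (x * zpoly sqrt_tail x))) as Hneg.
  rewrite Rabs_Ropp, Rabs_mult in Hneg.
  pose proof (Rabs_pos x); pose proof (Rabs_pos (zpoly sqrt_tail x)).
  nra.
Qed.

Definition sqrt_approx (x : R) : R := zpoly sqrt_num x / IZR sqrt_den.

Definition sqrt_err : R := 8/3 * IZR (zmax sqrt_defect) / IZR sqrt_den ^ 2.

Lemma sqrt_err_nonneg : 0 <= sqrt_err.
Proof.
  pose proof (zpoly_bound sqrt_defect 0 ltac:(rewrite Rabs_R0; lra)).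
  pose proof (Rabs_pos (zpoly sqrt_defect 0)); pose proof sqrt_den_pos.
  unfold sqrt_err, Rdiv; apply Rmult_le_pos; [lra|].
  left; apply Rinv_0_lt_compat, pow_lt; assumption.
Qed.

(* From (s - a)(s + a) = x^25 sqrt_defect(x) / sqrt_den^2 with s + a >= 3/4. *)
Lemma sqrt_approx_error (x : R) :
  Rabs x <= 1/4 -> Rabs (sqrt (1 + x) - sqrt_approx x) <= sqrt_err * Rabs x ^ 25.
Proof.
  intros Hx; pose proof (Rle_abs x); pose proof (Rle_abs (- x)); rewrite Rabs_Ropp in *.
  pose proof sqrt_den_pos as HD.
  set (s := sqrt (1 + x)); set (a := sqrt_approx x).
  assert (Hs : s * s = 1 + x) by (apply sqrt_sqrt; lra).
  assert (Hs0 : 0 <= s) by apply sqrt_pos.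
  assert (Ha : 3/4 <= a).
  { unfold a, sqrt_approx; apply Rmult_le_reg_r with (IZR sqrt_den); [exact HD|].
    replace (zpoly sqrt_num x / IZR sqrt_den * IZR sqrt_den) with (zpoly sqrt_num x)
      by (field; lra).
    exact (sqrt_num_lower x Hx). }
  assert (Hprod : (s - a) * (s + a) = x ^ 25 * zpoly sqrt_defect x / IZR sqrt_den ^ 2).
  { rewrite <- sqrt_num_defect; unfold a, sqrt_approx.
    replace ((s - _) * (s + _)) with (s * s - (zpoly sqrt_num x / IZR sqrt_den) ^ 2) by ring.
    rewrite Hs; field; lra. }
  assert (Hprod_abs : Rabs (s - a) * (s + a) <= Rabs x ^ 25 * (2 * IZR (zmax sqrt_defect)) / IZR sqrt_den ^ 2).
  { rewrite <- (Rabs_pos_eq (s + a)) by lra.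
    rewrite <- Rabs_mult, Hprod; unfold Rdiv.
    rewrite !Rabs_mult, <- RPow_abs, (Rabs_pos_eq (/ _)) by (left; apply Rinv_0_lt_compat, pow_lt, HD).
    apply Rmult_le_compat_r; [left; apply Rinv_0_lt_compat, pow_lt, HD|].
    apply Rmult_le_compat_l; [apply pow_le, Rabs_pos|apply zpoly_bound; lra]. }
  set (W := Rabs x ^ 25 * (2 * IZR (zmax sqrt_defect)) / IZR sqrt_den ^ 2) in Hprod_abs.
  assert (Hdiff : Rabs (s - a) <= 4/3 * W) by (pose proof (Rabs_pos (s - a)); nra).
  unfold sqrt_err, W in *.
  replace (8/3 * IZR (zmax sqrt_defect) / IZR sqrt_den ^ 2 * Rabs x ^ 25)
    with (4/3 * (Rabs x ^ 25 * (2 * IZR (zmax sqrt_defect)) / IZR sqrt_den ^ 2))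
    by (field; lra).
  exact Hdiff.
Qed.

(* Since max(1+x,0)^(13/2) = (1+x)^6 sqrt(1+x), the approximation lifts. *)
Lemma pos_pow13_2_approx (x : R) : Rabs x <= 1/4 ->
  Rabs (pos_pow13_2 (1 + x) - (1 + x) ^ 6 * sqrt_approx x) <= 4 * sqrt_err * Rabs x ^ 25.
Proof.
  intros Hx; pose proof (Rle_abs x); pose proof (Rle_abs (- x)); rewrite Rabs_Ropp in *.
  assert (Hsplit : pos_pow13_2 (1 + x) = (1 + x) ^ 6 * sqrt (1 + x)).
  { rewrite pos_pow13_2_nonneg by lra.
    rewrite <- (sqrt_sqrt (1 + x)) at 2 by lra; ring. }
  assert (Hpow : 0 <= (1 + x) ^ 6 <= 4).
  { split; [apply pow_le; lra|].
    apply Rle_trans with ((5/4) ^ 6); [apply pow_incr; lra|cbn; lra]. }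
  pose proof (sqrt_approx_error x Hx) as Herr.
  rewrite Hsplit, <- Rmult_minus_distr_l, Rabs_mult, (Rabs_pos_eq ((1 + x) ^ 6)) by lra.
  pose proof (Rabs_pos (sqrt (1 + x) - sqrt_approx x)).
  rewrite Rmult_assoc; apply Rmult_le_compat; lra.
Qed.

(* The exact value of the signed sum of the polynomial approximants, an even
   polynomial in t: everything below order 21 cancels, and the orders 21 and 23
   give 1 - t^2/24; [expansion_rem] collects the coefficients of the rest. *)
Definition expansion_rem : list Z := [
    -11292270290282741760; -16121201664416808960;
    -22247908345349406720; -34932849408737280000;
    -60129405836904628224; -102835799559461928960;
    -209723309756399222784; -459939013461884436480;
    -10948019742776816713728; -724945123466979627663360;
    -15090934149249798037266432; -173415300599091654576046080;
    -1441692612531759721345744896; -9244223787084882555957903360;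
    -47640912625881698977021648896; -206049271528722583744068648960;
    -784695624473044288280094474240; -2662345061337720790001948590080;
    -8148410530052706662934250930176; -22818527898196753638717925294080;
    -58988022565766025666966445080576; -142381161797847573423480858869760;
    -322172090595453197821905401167872; -686007664176853227232104055603200;
    -1377664869346655938567572257538048; -2625669220584183784662334244290560;
    -4756682880411539920887734790856704; -8211199339714586501147938134589440;
    -13516539360186924795067555913662464; -21252830331936717309222712919162880;
    -31975081258606497937576949657149440; -46045179438699971233708304282910720;
    -63520279696973560262317159051100160; -83970154656472452181882912590888960;
    -106499003641864981438878742609059840; -129591804714526970374546086344294400;
    -151343465610572738498581097955655680; -169591969372882337286640267341496320;
    -182482265091410214215086944498769920; -188464050522730557002490619565998080;
    -186886501085036415109573276763258880; -177683677886368126358058418378997760;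
    -162136632279303679025518095833210880; -141873637084681691379823292483665920;
    -118997421176687279201086291197788160; -95575660937063498049402994634096640;
    -73482924304278937032997398946652160; -54080149317711695358850813921689600;
    -38030254623878321651845543603568640; -25539616220113502463151475277004800;
    -16353821850243206413141303459799040; -9995672241649732377256426450944000;
    -5806794182070385182460326572851200; -3206452788026079481099515226521600;
    -1679413782369859117071668952883200; -832956693052202067727388934144000;
    -389721477604351452065588842905600; -170784406405725052991871614976000;
    -70021653978327301640585019801600; -26739304937856470112763244544000;
    -9442303930745918607326515200000; -3031485871139784008555544576000;
    -878120787795499714694731776000; -224718455459840003519090688000;
    -50149188313444640548896768000; -9508575870412654689239040000;
    -1389225450267522803819520000; -152436861242416138752000000;
    -11849525469976978667520000; -450552299238668390400000;
    -4505522992386683904000]%Z.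

Lemma signed_sum_approx (t : R) :
  sum_over (sign_vecs 6)
    (fun e => prodR e * ((1 + sgn_poly e t 1) ^ 6 * zpoly sqrt_num (sgn_poly e t 1)))
  = (IZR sqrt_den * 135135 * (24 * t ^ 21 - t ^ 23) + t ^ 25 * zpoly expansion_rem (t ^ 2)) / 24.
Proof.
  unfold sqrt_num, sqrt_den, sqrt_tail, expansion_rem.
  cbn [sign_vecs flat_map app sum_over fold_right prodR sgn_poly zpoly].
  field.
Qed.

Lemma signed_sum_main (t : R) :
  sum_over (sign_vecs 6)
    (fun e => prodR e * ((1 + sgn_poly e t 1) ^ 6 * sqrt_approx (sgn_poly e t 1)))
  = 135135 * (t ^ 21 - t ^ 23 / 24) + t ^ 25 * zpoly expansion_rem (t ^ 2) / (24 * IZR sqrt_den).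
Proof.
  pose proof sqrt_den_pos as HD.
  rewrite (sum_over_ext _ _ (fun e => / IZR sqrt_den *
             (prodR e * ((1 + sgn_poly e t 1) ^ 6 * zpoly sqrt_num (sgn_poly e t 1)))))
    by (intros e _; unfold sqrt_approx; field; lra).
  rewrite sum_over_scal, signed_sum_approx; field; lra.
Qed.

Lemma signed_sum_remainder (t : R) : 0 < t <= 1/8 ->
  Rabs (sum_over (sign_vecs 6) (fun e => prodR e * pos_pow13_2 (1 + sgn_poly e t 1))
        - sum_over (sign_vecs 6)
            (fun e => prodR e * ((1 + sgn_poly e t 1) ^ 6 * sqrt_approx (sgn_poly e t 1))))
  <= 64 * (4 * sqrt_err * (2 * t) ^ 25).
Proof.
  intros Ht; rewrite <- sum_over_minus.
  replace 64 with (INR (length (sign_vecs 6))) by (cbn; ring).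
  apply sum_over_abs_bound; intros e He.
  destruct (sign_vecs_spec 6 e He) as [_ Hsgn].
  pose proof (sgn_tail_small 6 e t He ltac:(lra)) as Hx.
  rewrite <- Rmult_minus_distr_l, Rabs_mult, prodR_abs, Rmult_1_l by exact Hsgn.
  eapply Rle_trans; [apply pos_pow13_2_approx; lra|].
  pose proof (Rabs_pos (pos_pow13_2 (1 + sgn_poly e t 1)
                        - (1 + sgn_poly e t 1) ^ 6 * sqrt_approx (sgn_poly e t 1))).
  apply Rmult_le_compat_l.
  - pose proof sqrt_err_nonneg; lra.
  - apply pow_incr; split; [apply Rabs_pos|lra].
Qed.

(* phi(t) = 1 - t^2/24 + O(t^4): the polynomial part contributes
   t^4 expansion_rem(t^2) / (24 sqrt_den 135135), the approximation error
   O(t^25) / t^21. *)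
Lemma phi_expansion : exists C delta : R, 0 < delta /\
  forall t : R, 0 < t < delta -> Rabs (phi t - (1 - t ^ 2 / 24)) <= C * t ^ 4.
Proof.
  pose proof sqrt_den_pos as HD.
  set (K1 := 2 * IZR (zmax expansion_rem) / (24 * IZR sqrt_den * 135135)).
  set (K2 := 64 * (4 * sqrt_err * 2 ^ 25) / 135135).
  exists (K1 + K2), (1/8); split; [lra|]; intros t Ht.
  assert (Ht21 : 0 < t ^ 21) by (apply pow_lt; lra).
  assert (Ht4 : 0 < t ^ 4) by (apply pow_lt; lra).
  rewrite phi_small by lra.
  pose proof (signed_sum_remainder t ltac:(lra)) as Hrem.
  rewrite signed_sum_main in Hrem.
  set (S := sum_over (sign_vecs 6) _) in *.
  set (Q := zpoly expansion_rem (t ^ 2)) in *.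
  assert (HQ : Rabs Q <= 2 * IZR (zmax expansion_rem)).
  { apply zpoly_bound; rewrite Rabs_pos_eq by (apply pow2_ge_0); cbn; nra. }
  set (T := 135135 * (t ^ 21 - t ^ 23 / 24) + t ^ 25 * Q / (24 * IZR sqrt_den)) in Hrem.
  replace (/ (135135 * t ^ 21) * S - (1 - t ^ 2 / 24))
    with (t ^ 4 * (Q / (24 * IZR sqrt_den * 135135)) + (S - T) / (135135 * t ^ 21))
    by (unfold T; field; lra).
  eapply Rle_trans; [apply Rabs_triang|]; rewrite Rmult_plus_distr_r.
  apply Rplus_le_compat.
  - rewrite Rabs_mult, Rabs_pos_eq, Rmult_comm by lra.
    apply Rmult_le_compat_r; [lra|]; unfold K1, Rdiv.
    rewrite Rabs_mult, (Rabs_pos_eq (/ _)) by (left; apply Rinv_0_lt_compat; lra).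
    apply Rmult_le_compat_r; [left; apply Rinv_0_lt_compat; lra|exact HQ].
  - unfold Rdiv; rewrite Rabs_mult, (Rabs_pos_eq (/ _)) by (left; apply Rinv_0_lt_compat; lra).
    apply Rle_trans with (64 * (4 * sqrt_err * (2 * t) ^ 25) * / (135135 * t ^ 21)).
    + apply Rmult_le_compat_r; [left; apply Rinv_0_lt_compat; lra|exact Hrem].
    + right; unfold K2; rewrite Rpow_mult_distr; field; lra.
Qed.

Lemma limit1_in_of_linear_bound (f : R -> R) (l K d : R) :
  0 < d -> (forall t, 0 < t < d -> Rabs (f t - l) <= K * t) ->
  limit1_in f (fun t => 0 < t) l 0.
Proof.
  intros Hd Hbound eps Heps.
  set (K' := Rabs K + 1).
  assert (HK' : 0 < K') by (unfold K'; pose proof (Rabs_pos K); lra).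
  exists (Rmin d (eps / K')); split.
  { apply Rmin_pos; [lra|apply Rdiv_lt_0_compat; lra]. }
  intros t [Ht Hdist]; cbn in *; unfold R_dist in *.
  rewrite Rminus_0_r, Rabs_pos_eq in Hdist by lra.
  pose proof (Rmin_l d (eps / K')); pose proof (Rmin_r d (eps / K')).
  assert (Hsmall : t * K' < eps).
  { apply Rmult_lt_reg_r with (/ K'); [apply Rinv_0_lt_compat; lra|].
    replace (eps * / K') with (eps / K') by reflexivity.
    rewrite Rmult_assoc, Rinv_r, Rmult_1_r by lra; lra. }
  pose proof (Hbound t ltac:(lra)); pose proof (Rle_abs K).
  unfold K' in Hsmall; nra.
Qed.

Lemma phi_limit : limit1_in phi (fun t => 0 < t) 1 0.
Proof.
  destruct phi_expansion as [C [d [Hd Hexp]]].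
  apply (limit1_in_of_linear_bound phi 1 (Rabs C + 1/24) (Rmin d 1)); [apply Rmin_pos; lra|].
  intros t Ht; pose proof (Rmin_l d 1); pose proof (Rmin_r d 1).
  pose proof (Hexp t ltac:(lra)) as Hclose.
  assert (Ht2 : t ^ 2 <= t) by (cbn; nra).
  assert (Ht4 : t ^ 4 <= t) by (replace (t ^ 4) with (t ^ 2 * t ^ 2) by ring; nra).
  pose proof (Rle_abs C); pose proof (pow_le t 4 ltac:(lra)).
  pose proof (Rabs_triang (phi t - (1 - t ^ 2 / 24)) (- (t ^ 2 / 24))) as Htri.
  rewrite Rabs_Ropp, (Rabs_pos_eq (t ^ 2 / 24)) in Htri by (pose proof (pow2_ge_0 t); lra).
  replace (phi t - (1 - t ^ 2 / 24) + - (t ^ 2 / 24)) with (phi t - 1) in Htri by ring.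
  assert (HC : C * t ^ 4 <= Rabs C * t).
  { apply Rle_trans with (Rabs C * t ^ 4).
    - apply Rmult_le_compat_r; assumption.
    - apply Rmult_le_compat_l; [apply Rabs_pos|assumption]. }
  lra.
Qed.

Theorem mainTheorem3 :
  (forall t : R, 0 < t -> phi (/ t) = t ^ 3 * phi t) /\
  limit1_in phi (fun t => 0 < t) 1 0 /\
  (forall t : R, 0 < t <= 1 / 2 ->
     phi t = / (135135 * t ^ 21) *
       sum_over (sign_vecs 6)
         (fun e => prodR e * Rpower (1 + sgn_poly e t 1) (13 / 2))) /\
  (exists C delta : R, 0 < delta /\
     forall t : R, 0 < t < delta ->
       Rabs (phi t - (1 - t ^ 2 / 24)) <= C * t ^ 4).
Proof.
  split; [exact phi_inv|].
  split; [exact phi_limit|].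
  split; [exact phi_small_Rpower|exact phi_expansion].
Qed.
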